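(* Let $P$ be a finite poset, let $P^*\subseteq P$ be a set of marked elements containing all minimal elements of $P$, let $\lambda,\mu\colon P^*\to\mathbb{R}$ be two order-preserving maps, and let $P\setminus P^* = C\sqcup O$ be any partition. Then \[\mathcal{O}_{C,O}(P,\lambda)+\mathcal{O}_{C,O}(P,\mu)\subseteq \mathcal{O}_{C,O}(P,\lambda+\mu)\] (Minkowski sum), and \[\mathcal{O}^{\mathbb{Z}}_{C,O}(P,\lambda)+\mathcal{O}^{\mathbb{Z}}_{C,O}(P,\mu)\subseteq \mathcal{O}^{\mathbb{Z}}_{C,O}(P,\lambda+\mu).\]
   Context: $p\prec q$ denotes a covering relation in $P$. For a finite poset $P$, a subset $P^*\subseteq P$ (the marked elements, with $\min(P)\subseteq P^*$), an order-preserving map (marking) $\lambda\colon P^*\to\mathbb{R}$, and a partition $P\setminus P^*=C\sqcup O$ into chain elements $C$ and order elements $O$, the marked chain-order polyhedron $\mathcal{O}_{C,O}(P,\lambda)\subseteq\mathbb{R}^P$ is the set of all $\mathbf{x}=(x_p)_{p\in P}$ such that: (1) $x_a=\lambda(a)$ for all $a\in P^*$; (2) $x_p\ge 0$ for all $p\in C$; (3) for every saturated chain $a\prec p_1\prec\cdots\prec p_r\prec b$ in $P$ with $a,b\in P^*\sqcup O$, all $p_i\in C$, $r\ge 0$, one has $x_{p_1}+\cdots+x_{p_r}\le x_b-x_a$. We write $\mathcal{O}^{\mathbb{Z}}_{C,O}(P,\lambda)=\mathcal{O}_{C,O}(P,\lambda)\cap\mathbb{Z}^P$. *)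

From mathcomp Require Import all_boot all_order all_algebra.
From mathcomp Require Import reals.
Set Implicit Arguments. Unset Strict Implicit. Unset Printing Implicit Defensive.
Import Order.TTheory GRing.Theory Num.Theory.
Local Open Scope order_scope.

Section MarkedChainOrder.
Context {disp : Order.disp_t} {P : finPOrderType disp} {R : realType}.

Definition covers (p q : P) : bool :=
  (p < q) && [forall r : P, ~~ ((p < r) && (r < q))].

Definition is_minimal (p : P) : bool := [forall q : P, ~~ (q < p)].

(* order-preserving marking on P* (values outside P* are irrelevant) *)
Definition marking_order_preserving (Pstar : {set P}) (lam : P -> R) : Prop :=
  forall a b : P, a \in Pstar -> b \in Pstar -> a <= b -> (lam a <= lam b)%R.

(* The marked chain-order polyhedron O_{C,O}(P, lam) as a predicate on R^P.
   A saturated chain a ⋖ p_1 ⋖ ... ⋖ p_r ⋖ b is given by a, the list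
   ps = [p_1; ...; p_r] and b, with path covers a (rcons ps b). *)
Definition in_MCOP (Pstar C O : {set P}) (lam : P -> R) (x : P -> R) : Prop :=
  [/\ (forall a, a \in Pstar -> x a = lam a),
      (forall p, p \in C -> (0 <= x p)%R) &
      (forall (a b : P) (ps : seq P),
          (a \in Pstar) || (a \in O) -> (b \in Pstar) || (b \in O) ->
          all (fun p => p \in C) ps ->
          path covers a (rcons ps b) ->
          (\sum_(p <- ps) x p <= x b - x a)%R)].

Definition in_MCOP_Z (Pstar C O : {set P}) (lam : P -> R) (x : P -> R) : Prop :=
  in_MCOP Pstar C O lam x /\ (forall p, x p \is a Num.int).

End MarkedChainOrder.

From mathcomp Require Import all_boot all_order all_algebra.
From mathcomp Require Import reals.
Import Order.TTheory GRing.Theory Num.Theory.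
Local Open Scope ring_scope.

(* Every defining condition of O_{C,O}(P, lam) is a linear equation or
   inequality in x whose right-hand side is linear in (x, lam), so the sum of
   a solution for lam and a solution for mu is a solution for lam + mu. *)

Section MinkowskiSum.
Context {disp : Order.disp_t} {P : finPOrderType disp} {R : realType}.
Variables Pstar C O : {set P}.

Lemma in_MCOP_add (lam mu x y : P -> R) :
  in_MCOP Pstar C O lam x -> in_MCOP Pstar C O mu y ->
  in_MCOP Pstar C O (fun p => lam p + mu p) (fun p => x p + y p).
Proof.
move=> [x_mark x_ge0 x_chain] [y_mark y_ge0 y_chain]; split.
- by move=> a aPstar; rewrite x_mark // y_mark.
- by move=> p pC; rewrite addr_ge0 ?x_ge0 ?y_ge0.
- move=> a b ps aPO bPO psC cover_path; rewrite big_split /= opprD addrACA.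
  by rewrite lerD ?x_chain ?y_chain.
Qed.

Lemma in_MCOP_Z_add (lam mu x y : P -> R) :
  in_MCOP_Z Pstar C O lam x -> in_MCOP_Z Pstar C O mu y ->
  in_MCOP_Z Pstar C O (fun p => lam p + mu p) (fun p => x p + y p).
Proof.
move=> [xMCOP x_int] [yMCOP y_int]; split; first exact: in_MCOP_add.
by move=> p; rewrite rpredD.
Qed.

End MinkowskiSum.

(* The hypotheses on minimal elements, on the markings and on the partition
   make O_{C,O} a marked chain-order polyhedron, but the inclusion holds
   without them. *)
Theorem lemma2p1 (disp : Order.disp_t) (P : finPOrderType disp) (R : realType)
  (Pstar C O : {set P}) (lam mu : P -> R) :
  (forall p : P, is_minimal p -> p \in Pstar) ->
  marking_order_preserving Pstar lam ->
  marking_order_preserving Pstar mu ->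
  [disjoint C & O] ->
  C :|: O = ~: Pstar ->
  (forall x y : P -> R,
      in_MCOP Pstar C O lam x -> in_MCOP Pstar C O mu y ->
      in_MCOP Pstar C O (fun p => lam p + mu p) (fun p => x p + y p)) /\
  (forall x y : P -> R,
      in_MCOP_Z Pstar C O lam x -> in_MCOP_Z Pstar C O mu y ->
      in_MCOP_Z Pstar C O (fun p => lam p + mu p) (fun p => x p + y p)).
Proof.
by move=> _ _ _ _ _; split=> x y; [exact: in_MCOP_add | exact: in_MCOP_Z_add].
Qed.
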